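(* Let ${\rm d}\ge4$ and consider a static spherically symmetric charged fluid with metric $ds^2=-W(r)^2dt^2+U(r)^2dr^2+r^2d\Omega_{{\rm d}-2}$ for $r\le\mathfrak a$, in which $W^2=a(-\epsilon\sqrt{G_{\rm d}}\phi+b)^2+c$ with constants $a>0,b,c$ and $\epsilon\in\{1,-1\}$, joined at $r=\mathfrak a$ to the exterior Tangherlini (Reissner–Nordström) metric $ds^2=-f(r)dt^2+f(r)^{-1}dr^2+r^2d\Omega_{{\rm d}-2}$, $f(r)=1-\frac{2G_{\rm d}}{{\rm d}-3}\frac{m}{r^{{\rm d}-3}}+\frac{G_{\rm d}}{({\rm d}-3)^2}\frac{q^2}{r^{2({\rm d}-3)}}$, with $q\neq0$, such that $W(\mathfrak a)^2=1/U(\mathfrak a)^2=f(\mathfrak a)$, $W'(\mathfrak a)=f'(\mathfrak a)/(2W(\mathfrak a))$, and the interior charge function $Q(r)=r^{{\rm d}-2}\phi'(r)/(W U)$ satisfies $Q(\mathfrak a)=q$. Then $ac=a\left[1-\frac{G_{\rm d}m^2}{q^2}\right]+(a-1)\left(\frac{m}{q}-\frac{q}{({\rm d}-3)\mathfrak a^{{\rm d}-3}}\right)^2G_{\rm d}$.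
   Context: $d\Omega_{{\rm d}-2}$ is the round metric on the unit sphere $\mathbf S^{{\rm d}-2}$; $G_{\rm d}>0$ is the ${\rm d}$-dimensional gravitational constant; $\phi(r)$ is the electrostatic potential ($A_\mu=-\phi\delta^0_\mu$); primes denote $d/dr$. The function $Q(r)$ is the charge enclosed within radius $r$ obtained by integrating the Maxwell equation, and $m,q$ are the mass and charge parameters of the exterior solution. *)

From Stdlib Require Import Reals Lra.
Open Scope R_scope.

Definition tangherlini_f (d : nat) (G m q : R) (r : R) : R :=
  1 - 2 * G / INR (d - 3) * m / r ^ (d - 3)
    + G / (INR (d - 3)) ^ 2 * q ^ 2 / r ^ (2 * (d - 3)).

Definition left_derivative (g : R -> R) (x l : R) : Prop :=
  forall eps : R, 0 < eps ->
    exists delta : R, 0 < delta /\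
      forall h : R, - delta < h < 0 ->
        Rabs ((g (x + h) - g x) / h - l) < eps.

(* Differentiating the interior relation W^2 = a (A phi + b)^2 + c,
   with A = -eps sqrt G, from the inside at the boundary r = fa gives
       2 W W' = 2 a (A phi + b) A phi'.
   The junction conditions identify every factor with exterior data:
   W U = 1 (from W^2 = 1/U^2 = f), hence phi'(fa) = q / fa^(d-2) by the
   charge condition, and W' = f'/(2W) with f' computed explicitly.  Setting
   n = d - 3, x = fa^n and Y = A phi(fa) + b this yields the linear relation
   G (m - q^2/(n x)) = a Y A q.  Squaring it (A^2 = G) expresses a^2 Y^2, and
   c = f(fa) - a Y^2 then gives the claim by pure algebra. *)

From Stdlib Require Import Reals Lra Lia.
Open Scope R_scope.

Lemma left_derivative_limit (g : R -> R) (x l : R) :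
  left_derivative g x l <->
  limit1_in (fun h => (g (x + h) - g x) / h) (fun h => h < 0) l 0.
Proof.
  unfold left_derivative, limit1_in, limit_in; simpl; unfold R_dist.
  split; intros H e He; destruct (H e He) as [delta [Hdelta Hclose]];
    exists delta; split; auto.
  - intros h [Hneg Hsmall]. rewrite Rminus_0_r in Hsmall.
    apply Hclose. apply Rabs_def2 in Hsmall. lra.
  - intros h Hh. apply Hclose. rewrite Rminus_0_r, Rabs_left; lra.
Qed.

Lemma limit1_in_ext (f g : R -> R) (D : R -> Prop) (l x0 : R) :
  (forall x, D x -> f x = g x) -> limit1_in f D l x0 -> limit1_in g D l x0.
Proof.
  intros Efg H e He. destruct (H e He) as [alpha [Halpha Hclose]].
  exists alpha; split; auto. intros y [Dy Hy]. rewrite <- Efg by auto. auto.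
Qed.

Lemma left_derivative_affine (g : R -> R) (x l A B : R) :
  left_derivative g x l -> left_derivative (fun r => A * g r + B) x (A * l).
Proof.
  rewrite !left_derivative_limit. intros H.
  apply (limit1_in_ext (fun h => A * ((g (x + h) - g x) / h))).
  - intros h Hh. field. lra.
  - exact (limit_mul _ _ _ _ _ _ (limit_free (fun _ => A) _ 0 0) H).
Qed.

(* (g^2)' = 2 g g' from the left: the quotient factors as
   q(h) * (2 g(x) + h q(h)) with q the difference quotient of g. *)
Lemma left_derivative_square (g : R -> R) (x l : R) :
  left_derivative g x l -> left_derivative (fun r => g r ^ 2) x (2 * g x * l).
Proof.
  rewrite !left_derivative_limit. intros H.
  set (dq := fun h => (g (x + h) - g x) / h) in H.
  assert (Hid : limit1_in (fun h => h) (fun h => h < 0) 0 0).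
  { intros e He. exists e; split; auto. intros y [_ Hy]. exact Hy. }
  assert (Hfactor := limit_mul _ _ _ _ _ _ H
    (limit_plus _ _ _ _ _ _ (limit_free (fun _ => 2 * g x) _ 0 0)
       (limit_mul _ _ _ _ _ _ Hid H))).
  replace (2 * g x * l) with (l * (2 * g x + 0 * l)) by ring.
  refine (limit1_in_ext _ _ _ _ _ _ Hfactor).
  intros h Hh. unfold dq. field. lra.
Qed.

Lemma left_derivative_local (f g : R -> R) (x l delta : R) :
  0 < delta -> (forall r, x - delta < r <= x -> f r = g r) ->
  left_derivative f x l -> left_derivative g x l.
Proof.
  intros Hdelta Efg H e He. destruct (H e He) as [delta' [Hdelta' Hclose]].
  exists (Rmin delta delta'); split; [now apply Rmin_glb_lt|].
  intros h Hh. pose proof (Rmin_l delta delta'). pose proof (Rmin_r delta delta').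
  rewrite <- !Efg by lra. apply Hclose. lra.
Qed.

(* Left derivatives are unique (0 is adherent to the negative reals). *)
Lemma left_derivative_unique (g : R -> R) (x l1 l2 : R) :
  left_derivative g x l1 -> left_derivative g x l2 -> l1 = l2.
Proof.
  rewrite !left_derivative_limit. apply single_limit.
  intros alpha Halpha. exists (- alpha / 2). unfold R_dist.
  rewrite Rminus_0_r, Rabs_left; lra.
Qed.

Lemma derivable_pt_lim_inv_pow (C : R) (k : nat) (r : R) :
  r <> 0 ->
  derivable_pt_lim (fun s => C / s ^ k) r (- (INR k * C) / (r * r ^ k)).
Proof.
  intros Hr.
  assert (H := derivable_pt_lim_div (fun _ => C) (fun s => s ^ k) r 0 _
     (derivable_pt_lim_const C r) (derivable_pt_lim_pow r k) (pow_nonzero r k Hr)).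
  replace (- (INR k * C) / (r * r ^ k))
    with ((0 * r ^ k - INR k * r ^ Nat.pred k * C) / Rsqr (r ^ k)).
  - exact H.
  - unfold Rsqr. pose proof (pow_nonzero r k Hr).
    destruct k as [|j]; simpl Nat.pred.
    + simpl. field. exact Hr.
    + change (r ^ S j) with (r * r ^ j). field.
      split; [now apply pow_nonzero | exact Hr].
Qed.

Lemma tangherlini_f_derivative (d : nat) (G m q r : R) :
  (4 <= d)%nat -> 0 < r ->
  derivable_pt_lim (tangherlini_f d G m q) r
    (2 * G / r * (m / r ^ (d - 3) - q ^ 2 / (INR (d - 3) * (r ^ (d - 3)) ^ 2))).
Proof.
  intros Hd Hr. set (n := (d - 3)%nat).
  assert (HN : 0 < INR n) by (apply lt_0_INR; unfold n; lia).
  assert (Hx : 0 < r ^ n) by (apply pow_lt; lra).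
  assert (Hsum := derivable_pt_lim_plus _ _ _ _ _
    (derivable_pt_lim_minus _ _ _ _ _ (derivable_pt_lim_const 1 r)
       (derivable_pt_lim_inv_pow (2 * G / INR n * m) n r ltac:(lra)))
    (derivable_pt_lim_inv_pow (G / INR n ^ 2 * q ^ 2) (2 * n) r ltac:(lra))).
  replace (2 * G / r * (m / r ^ n - q ^ 2 / (INR n * (r ^ n) ^ 2))) with
    (0 - - (INR n * (2 * G / INR n * m)) / (r * r ^ n)
     + - (INR (2 * n) * (G / INR n ^ 2 * q ^ 2)) / (r * r ^ (2 * n))).
  - exact Hsum.
  - rewrite mult_INR, Nat.mul_comm, pow_mult. simpl INR. field. lra.
Qed.

Lemma junction_metric_product (w u F : R) :
  0 < w -> 0 < u -> w ^ 2 = F -> 1 / u ^ 2 = F -> w * u = 1.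
Proof.
  intros Hw Hu HwF HuF.
  assert (Hsq : (w * u) ^ 2 = 1).
  { rewrite Rpow_mult_distr, HwF, <- HuF. field. lra. }
  assert (0 < w * u) by (apply Rmult_lt_0_compat; lra). nra.
Qed.

Lemma junction_identity (G a c m q n x Y A : R) :
  0 < G -> q <> 0 -> 0 < n -> 0 < x -> A ^ 2 = G ->
  c = (1 - 2 * G / n * m / x + G / n ^ 2 * q ^ 2 / x ^ 2) - a * Y ^ 2 ->
  G * (m - q ^ 2 / (n * x)) = a * Y * A * q ->
  a * c = a * (1 - G * m ^ 2 / q ^ 2) + (a - 1) * (m / q - q / (n * x)) ^ 2 * G.
Proof.
  intros HG Hq Hn Hx HA Hc Hlin.
  assert (Hsq : a ^ 2 * Y ^ 2 = G * (m / q - q / (n * x)) ^ 2).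
  { apply (Rmult_eq_reg_l (G * q ^ 2)).
    - replace (G * q ^ 2 * (a ^ 2 * Y ^ 2)) with ((a * Y * A * q) ^ 2)
        by (rewrite <- HA; ring).
      rewrite <- Hlin. field. lra.
    - apply Rmult_integral_contrapositive_currified; [lra|]. now apply pow_nonzero. }
  rewrite Hc.
  replace (a * (_ - a * Y ^ 2)) with
    (a * (1 - 2 * G / n * m / x + G / n ^ 2 * q ^ 2 / x ^ 2) - a ^ 2 * Y ^ 2) by ring.
  rewrite Hsq. field. lra.
Qed.

Theorem mainTheorem15
  (d : nat) (G a b c eps m q fa : R)
  (W U phi : R -> R) (dW dphi fp : R)
  (hd : (4 <= d)%nat) (hG : 0 < G) (ha : 0 < a)
  (heps : eps = 1 \/ eps = -1) (hq : q <> 0) (hfa : 0 < fa)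
  (* interior metric functions are positive on (0, fa] *)
  (hpos : forall r, 0 < r <= fa -> 0 < W r /\ 0 < U r)
  (* interior relation W^2 = a(-eps sqrt G phi + b)^2 + c for r <= fa *)
  (hW2 : forall r, 0 < r <= fa ->
           (W r) ^ 2 = a * (- eps * sqrt G * phi r + b) ^ 2 + c)
  (* W'(fa) and phi'(fa) are the (left) derivatives of the interior solution *)
  (hdW : left_derivative W fa dW)
  (hdphi : left_derivative phi fa dphi)
  (* f'(fa) *)
  (hfp : derivable_pt_lim (tangherlini_f d G m q) fa fp)
  (* junction conditions *)
  (hmatchW : (W fa) ^ 2 = tangherlini_f d G m q fa)
  (hmatchU : 1 / (U fa) ^ 2 = tangherlini_f d G m q fa)
  (hmatchdW : dW = fp / (2 * W fa))
  (* charge: Q(fa) = fa^(d-2) phi'(fa) / (W U) = q *)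
  (hQ : fa ^ (d - 2) * dphi / (W fa * U fa) = q) :
  a * c = a * (1 - G * m ^ 2 / q ^ 2)
          + (a - 1) * (m / q - q / (INR (d - 3) * fa ^ (d - 3))) ^ 2 * G.
Proof.
  destruct (hpos fa) as [HW HU]; [lra|].
  set (A := - eps * sqrt G). set (Y := A * phi fa + b).
  assert (Hboundary : 2 * W fa * dW = a * (2 * Y * (A * dphi))).
  { apply (left_derivative_unique (fun r => W r ^ 2) fa).
    - exact (left_derivative_square _ _ _ hdW).
    - apply (left_derivative_local (fun r => a * (A * phi r + b) ^ 2 + c) _ _ _ fa hfa).
      + intros r Hr. symmetry. apply hW2. lra.
      + exact (left_derivative_affine _ _ _ a c
                 (left_derivative_square _ _ _ (left_derivative_affine _ _ _ A b hdphi))). }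
  assert (Hfp := uniqueness_limite _ _ _ _ hfp (tangherlini_f_derivative d G m q fa hd hfa)).
  assert (HWU := junction_metric_product _ _ _ HW HU hmatchW hmatchU).
  set (n := (d - 3)%nat) in *. set (x := fa ^ n) in *.
  assert (Hn : 0 < INR n) by (apply lt_0_INR; unfold n; lia).
  assert (Hx : 0 < x) by (apply pow_lt; lra).
  assert (Hdphi : dphi = q / (fa * x)).
  { replace (d - 2)%nat with (S n) in hQ by (unfold n; lia).
    rewrite HWU, Rdiv_1_r in hQ. rewrite <- hQ. simpl. fold x. field. lra. }
  apply (junction_identity G a c m q (INR n) x Y A); auto.
  - (* A^2 = G since eps^2 = 1 *)
    unfold A. replace ((- eps * sqrt G) ^ 2) with (eps ^ 2 * (sqrt G * sqrt G)) by ring.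
    rewrite sqrt_sqrt by lra. destruct heps; subst eps; ring.
  -
    replace c with (W fa ^ 2 - a * Y ^ 2) by (rewrite (hW2 fa) by lra; unfold Y, A; ring).
    rewrite hmatchW. unfold tangherlini_f. fold n. rewrite Nat.mul_comm, pow_mult. fold x. ring.
  - (* the boundary derivative relation, divided by 2/(fa x) *)
    rewrite hmatchdW, Hfp, Hdphi in Hboundary.
    apply (Rmult_eq_reg_l (1 / (fa * x))); [|apply Rgt_not_eq, Rdiv_lt_0_compat; nra].
    transitivity (2 * W fa * (2 * G / fa * (m / x - q ^ 2 / (INR n * x ^ 2)) / (2 * W fa)) / 2).
    + field. lra.
    + rewrite Hboundary. field. lra.
Qed.
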